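(* Let $(X,\sigma,\tau)$ be a full, separable, chronologically dense Lorentzian metric space satisfying the S-property, and let $x,y\in X$. Then $\mathbf{i}(x)\leq_{\overline{\tau}}\mathbf{i}(y)$ if and only if $y\in\overline{J^+(x)}$ and $x\in\overline{J^-(y)}$ (closures in $\sigma$).
   Context: A Lorentzian metric space $(X,\sigma,\tau)$ is a topological space with $\tau:X\times X\to[0,\infty]$ lower semicontinuous and satisfying $\tau(x,z)\geq\tau(x,y)+\tau(y,z)$ whenever $\tau(x,y),\tau(y,z)>0$. Write $x\ll y$ iff $\tau(x,y)>0$, $I^+(x)=\{y:x\ll y\}$, $I^-(x)=\{y:y\ll x\}$, $I^\pm[A]=\bigcup_{a\in A}I^\pm(a)$. Full: $I^\pm(x)\neq\emptyset$ for all $x$. Future (resp. past) chain: $x_n\ll x_{n+1}$ (resp. $x_{n+1}\ll x_n$). Separable: there is a countable $S$ with $x\ll y\Rightarrow\exists s\in S$, $x\ll s\ll y$. Chronologically dense: every $x$ with $I^-(x)\neq\emptyset$ (resp. $I^+(x)\neq\emptyset$) is the $\sigma$-limit of a future (resp. past) chain. Define $x\leq_\tau y$ iff $I^-(x)\subset I^-(y)$ and $I^+(y)\subset I^+(x)$, and $J^+(x)=\{y:x\leq_\tau y\}$, $J^-(y)=\{x:x\leq_\tau y\}$. Past set: $P=I^-[P]$; $\downarrow S=I^-[\{p:p\ll q\ \forall q\in S\}]$; IP: past set not the union of two proper past subsets; PIP: IP of the form $I^-(p)$; future sets, $\uparrow S$, IF, PIF dually. For nonempty IP $P$ and IF $F$,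 $P\sim_S F$ iff $P$ is a maximal IP in $\downarrow F$ and $F$ a maximal IF in $\uparrow P$; $P\sim_S\emptyset$ (resp. $\emptyset\sim_S F$) if the nonempty $P$ (resp. $F$) is S-related to no nonempty IF (resp. IP). S-property: for every $x$, $I^-(x)\sim_S I^+(x)$, and no other PIF (resp. PIP) is S-related to $I^-(x)$ (resp. $I^+(x)$). c-completion $\overline X=\{(P,F):P\sim_S F\}$, $\mathbf{i}(x)=(I^-(x),I^+(x))$. $\overline\tau((P,F),(P',F'))=0$ if $F=\emptyset$ or $P'=\emptyset$, otherwise $\lim_n\tau(q_n,p'_n)$ for a past chain $\{q_n\}$ with $I^+[\{q_n\}]=F$ and future chain $\{p'_n\}$ with $I^-[\{p'_n\}]=P'$. $a\,\overline\ll\,b$ iff $\overline\tau(a,b)>0$; with $\overline I^\pm$ the corresponding futures/pasts in $\overline X$, $a\leq_{\overline\tau}b$ iff $\overline I^-(a)\subset\overline I^-(b)$ and $\overline I^+(b)\subset\overline I^+(a)$. *)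

From HB Require Import structures.
From mathcomp Require Import all_boot all_order all_algebra.
From mathcomp Require Import all_classical all_reals all_analysis.
Set Implicit Arguments. Unset Strict Implicit. Unset Printing Implicit Defensive.
Import Order.TTheory GRing.Theory Num.Theory.
Local Open Scope classical_set_scope.
Local Open Scope ereal_scope.

Section LorentzianMetricSpaces.
Context {R : realType} {X : topologicalType}.
Variable tau : X -> X -> \bar R.

Definition is_lorentzian_metric : Prop :=
  (forall x y, 0 <= tau x y) /\
  lower_semicontinuous (fun p : X * X => tau p.1 p.2) /\
  (forall x y z, 0 < tau x y -> 0 < tau y z -> tau x y + tau y z <= tau x z).

Definition ll (x y : X) : Prop := 0 < tau x y.

Definition Ip (x : X) : set X := [set y | ll x y].
Definition Im (x : X) : set X := [set y | ll y x].
Definition Ip_set (A : set X) : set X := \bigcup_(a in A) Ip a.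
Definition Im_set (A : set X) : set X := \bigcup_(a in A) Im a.

Definition full : Prop := forall x, Ip x !=set0 /\ Im x !=set0.

Definition future_chain (p : nat -> X) : Prop := forall n, ll (p n) (p n.+1).
Definition past_chain (p : nat -> X) : Prop := forall n, ll (p n.+1) (p n).

Definition separable_lms : Prop :=
  exists S : set X, countable S /\
    forall x y, ll x y -> exists2 s, S s & ll x s /\ ll s y.

Definition chron_dense : Prop :=
  (forall x, Im x !=set0 ->
     exists p, future_chain p /\ p @ \oo --> x) /\
  (forall x, Ip x !=set0 ->
     exists p, past_chain p /\ p @ \oo --> x).

Definition leq_tau (x y : X) : Prop := Im x `<=` Im y /\ Ip y `<=` Ip x.
Definition Jp (x : X) : set X := [set y | leq_tau x y].
Definition Jm (y : X) : set X := [set x | leq_tau x y].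

Definition past_set (P : set X) : Prop := P = Im_set P.
Definition future_set (F : set X) : Prop := F = Ip_set F.

Definition IP (P : set X) : Prop :=
  P !=set0 /\ past_set P /\
  ~ (exists A B, past_set A /\ past_set B /\ A `<` P /\ B `<` P /\ P = A `|` B).
Definition IF (F : set X) : Prop :=
  F !=set0 /\ future_set F /\
  ~ (exists A B, future_set A /\ future_set B /\ A `<` F /\ B `<` F /\ F = A `|` B).

Definition down (S : set X) : set X :=
  Im_set [set p | forall q, S q -> ll p q].
Definition up (S : set X) : set X :=
  Ip_set [set p | forall q, S q -> ll q p].

Definition max_IP_in (P A : set X) : Prop :=
  IP P /\ P `<=` A /\ (forall P', IP P' -> P `<=` P' -> P' `<=` A -> P' = P).
Definition max_IF_in (F A : set X) : Prop :=
  IF F /\ F `<=` A /\ (forall F', IF F' -> F `<=` F' -> F' `<=` A -> F' = F).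

Definition Srel_ne (P F : set X) : Prop :=
  P !=set0 /\ F !=set0 /\ IP P /\ IF F /\ max_IP_in P (down F) /\ max_IF_in F (up P).

Definition Srel (P F : set X) : Prop :=
  Srel_ne P F \/
  (IP P /\ F = set0 /\ forall F', F' !=set0 -> IF F' -> ~ Srel_ne P F') \/
  (P = set0 /\ IF F /\ forall P', P' !=set0 -> IP P' -> ~ Srel_ne P' F).

Definition S_property : Prop :=
  forall x, Srel (Im x) (Ip x) /\
    (forall p, Srel (Im x) (Ip p) -> Ip p = Ip x) /\
    (forall p, Srel (Im p) (Ip x) -> Im p = Im x).

(* the c-completion: pairs (P,F) with P ~_S F *)
Definition cpoint (a : set X * set X) : Prop := Srel a.1 a.2.
Definition iemb (x : X) : set X * set X := (Im x, Ip x).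

Definition taubar_chains (a b : set X * set X) (qp : (nat -> X) * (nat -> X)) : Prop :=
  past_chain qp.1 /\ Ip_set (range qp.1) = a.2 /\
  future_chain qp.2 /\ Im_set (range qp.2) = b.1.

Definition taubar (a b : set X * set X) : \bar R :=
  if pselect (a.2 = set0 \/ b.1 = set0) is left _ then 0
  else match pselect (exists qp, taubar_chains a b qp) with
       | left h => let qp := projT1 (cid h) in
                   limn (fun n => tau (qp.1 n) (qp.2 n))
       | right _ => 0
       end.

Definition llbar (a b : set X * set X) : Prop := 0 < taubar a b.

Definition leq_taubar (a b : set X * set X) : Prop :=
  (forall c, cpoint c -> llbar c a -> llbar c b) /\
  (forall c, cpoint c -> llbar b c -> llbar a c).

End LorentzianMetricSpaces.

From HB Require Import structures.
From mathcomp Require Import all_boot all_order all_algebra.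
From mathcomp Require Import all_classical all_reals all_analysis.
Import Order.TTheory.

(* Both sides are equivalent to x <=_tau y.  By separability every IP (IF)
   is generated by a future (past) chain, and along a past chain q and a
   future chain p the values tau(q_n, p_n) are nondecreasing; hence
   taubar((P,F),(P',F')) > 0 exactly when F meets P', whatever chains are
   chosen.  As the S-property makes I^-(x) an IP and I^+(x) an IF, this gives
   i(x) << i(y) iff x << y, and i(x) <=_taubar i(y) iff x <=_tau y.  On the
   other side, x ∈ cl J^-(y) already forces I^-(x) ⊆ I^-(y): for w << x the
   open set I^+(w) around x contains some v <=_tau y, so
   w ∈ I^-(v) ⊆ I^-(y); dually for I^+. *)

Set Implicit Arguments.
Unset Strict Implicit.
Unset Printing Implicit Defensive.

Local Open Scope classical_set_scope.
Local Open Scope ereal_scope.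

Lemma countable_range_cover T (S : set T) (x0 : T) :
  countable S -> exists e : nat -> T, S `<=` range e.
Proof.
move=> /countable_injP[f finj].
have /choice[e he] :
    forall n, exists t, (exists2 s, S s & f s = n) -> S t /\ f t = n.
  move=> n; have [[s Ss fs]|nS] := pselect (exists2 s, S s & f s = n).
    by exists s.
  by exists x0 => /nS.
exists e => s Ss; exists (f s) => //.
have [Se fe] := he (f s) (ex_intro2 _ _ s Ss erefl).
by apply: finj; rewrite ?inE.
Qed.

Section Chronology.
Context {R : realType} {X : topologicalType}.
Variable tau : X -> X -> \bar R.

Definition gen_by_future_chain (P : set X) :=
  exists p, future_chain tau p /\ Im_set tau (range p) = P.

Definition gen_by_past_chain (F : set X) :=
  exists q, past_chain tau q /\ Ip_set tau (range q) = F.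

Lemma ll_trans_lorentzian : is_lorentzian_metric tau ->
  forall a b c, ll tau a b -> ll tau b c -> ll tau a c.
Proof.
move=> [_ [_ tri]] a b c ab bc.
by apply: lt_le_trans (tri _ _ _ ab bc); apply: adde_gt0.
Qed.

Lemma separable_interpolate : separable_lms tau ->
  forall a b, ll tau a b -> exists2 s, ll tau a s & ll tau s b.
Proof. by move=> [S [_ hS]] a b /hS[s _ []]; exists s. Qed.

Lemma separable_lms_rev :
  separable_lms tau -> separable_lms (fun a b => tau b a).
Proof.
by move=> [S [cS hS]]; exists S; split=> // a b /hS[s Ss []]; exists s.
Qed.

End Chronology.

Section PastSets.
Context {R : realType} {X : topologicalType}.
Variable tau : X -> X -> \bar R.
Hypothesis ll_trans : forall a b c, ll tau a b -> ll tau b c -> ll tau a c.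

Lemma future_chain_lt p : future_chain tau p ->
  forall m n, (m < n)%N -> ll tau (p m) (p n).
Proof.
move=> hp m; elim=> // n IH; rewrite ltnS leq_eqVlt => /predU1P[->|/IH mn].
  exact: hp.
exact: ll_trans mn (hp n).
Qed.

Lemma past_set_sub P w c : past_set tau P -> P c -> ll tau w c -> P w.
Proof. by move=> pastP Pc wc; rewrite pastP; exists c. Qed.

Hypothesis ll_interpolate :
  forall a b, ll tau a b -> exists2 s, ll tau a s & ll tau s b.

Lemma past_set_Im_set S : past_set tau (Im_set tau S).
Proof.
apply/seteqP; split=> [w [c Sc wc]|w [s [c Sc sc] ws]].
  by have [s ws sc] := ll_interpolate wc; exists s => //; exists c.
by exists c => //; apply: ll_trans ws sc.
Qed.

Lemma IP_directed P : IP tau P ->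
  forall a b, P a -> P b -> exists z, [/\ P z, ll tau a z & ll tau b z].
Proof.
move=> [_ [pastP indecP]] a b Pa Pb.
have subP w c := @past_set_sub P w c pastP.
apply: contrapT => nodir; apply: indecP.
exists (Im_set tau (P `&` Ip tau a)), (Im_set tau (P `&` ~` Ip tau a)).
split; first exact: past_set_Im_set.
split; first exact: past_set_Im_set.
split.
  split; first by move=> w [c [Pc _] wc]; apply: subP wc.
  by move=> /(_ b Pb)[c [Pc ac] bc]; apply: nodir; exists c.
split.
  split; first by move=> w [c [Pc _] wc]; apply: subP wc.
  by move=> /(_ a Pa)[c [Pc nac] /nac].
apply/seteqP; split=> [w Pw|w [|] [c [Pc _] wc]]; [|exact: subP wc..].
have [c Pc wc] : Im_set tau P w by rewrite -pastP.
by have [ac|nac] := pselect (ll tau a c); [left|right]; exists c.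
Qed.

Lemma IP_cofinal_chain P (e : nat -> X) : IP tau P ->
  exists p, [/\ future_chain tau p, forall n, P (p n)
                & forall n, P (e n) -> ll tau (e n) (p n)].
Proof.
move=> IPP; have [[z0 Pz0] [pastP _]] := IPP.
have /choice[next hnext] : forall an : X * nat, exists z, P an.1 ->
    [/\ P z, ll tau an.1 z & P (e an.2) -> ll tau (e an.2) z].
  move=> [a n] /=; have [Pa|] := pselect (P a); last by exists z0.
  have [Pe|nPe] := pselect (P (e n)).
    by have [z [Pz az ez]] := IP_directed IPP Pa Pe; exists z.
  have [c Pc ac] : Im_set tau P a by rewrite -pastP.
  by exists c.
pose p := fix p n := next (if n is m.+1 then p m else z0, n).
have Pp n : P (p n).
  by elim: n => [|n IH]; [case: (hnext (z0, 0%N)) | case: (hnext (p n, n.+1))].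
exists p; split=> // n; first by case: (hnext (p n, n.+1) (Pp n)).
case: n => [|n]; first by case: (hnext (z0, 0%N) Pz0) => _ _; apply.
by case: (hnext (p n, n.+1) (Pp n)) => _ _; apply.
Qed.

Lemma IP_future_chain P :
  separable_lms tau -> IP tau P -> gen_by_future_chain tau P.
Proof.
move=> [S [cS hS]] IPP; have [[z0 Pz0] [pastP _]] := IPP.
have [e Se] := countable_range_cover z0 cS.
have [p [hp Pp ep]] := IP_cofinal_chain e IPP.
exists p; split=> //; apply/seteqP; split=> [w [_ [n _ <-] wp]|w Pw].
  exact: past_set_sub pastP (Pp n) wp.
have [c Pc wc] : Im_set tau P w by rewrite -pastP.
have [s Ss [ws sc]] := hS w c wc.
have [n _ esn] := Se s Ss.
exists (p n); first by exists n.
apply: ll_trans ws _; rewrite -esn; apply: ep.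
by rewrite esn; apply: past_set_sub pastP Pc sc.
Qed.

End PastSets.

Section PastFutureDuality.
Context {R : realType} {X : topologicalType}.
Variable tau : X -> X -> \bar R.
Hypothesis ll_trans : forall a b c, ll tau a b -> ll tau b c -> ll tau a c.

(* Past notions for tau are definitionally future notions for tau_rev. *)
Let tau_rev a b := tau b a.

Let ll_trans_rev a b c : ll tau_rev a b -> ll tau_rev b c -> ll tau_rev a c.
Proof. by move=> ab bc; apply: ll_trans bc ab. Qed.

Lemma past_chain_lt q : past_chain tau q ->
  forall m n, (m < n)%N -> ll tau (q n) (q m).
Proof. exact: (@future_chain_lt _ _ tau_rev ll_trans_rev q). Qed.

Lemma IF_past_chain F :
  separable_lms tau -> IF tau F -> gen_by_past_chain tau F.
Proof.
move=> /separable_lms_rev sep.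
exact: (@IP_future_chain _ _ tau_rev ll_trans_rev
                         (separable_interpolate sep) F sep).
Qed.

End PastFutureDuality.

Section Taubar.
Context {R : realType} {X : topologicalType}.
Variable tau : X -> X -> \bar R.
Hypothesis lorentzian : is_lorentzian_metric tau.

Let tau_ge0 : forall x y, 0 <= tau x y := lorentzian.1.
Let ll_trans a b c : ll tau a b -> ll tau b c -> ll tau a c :=
  @ll_trans_lorentzian _ _ tau lorentzian a b c.

Lemma tau_le_extendr x y z : ll tau x y -> ll tau y z -> tau x y <= tau x z.
Proof.
move=> xy yz; have [_ [_ tri]] := lorentzian.
by apply: le_trans (tri _ _ _ xy yz); apply: leeDl.
Qed.

Lemma tau_le_extendl x y z : ll tau x y -> ll tau y z -> tau y z <= tau x z.
Proof.
move=> xy yz; have [_ [_ tri]] := lorentzian.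
by apply: le_trans (tri _ _ _ xy yz); apply: leeDr.
Qed.

Lemma tau_chains_nondecreasing q p : past_chain tau q -> future_chain tau p ->
  nondecreasing_seq (fun n => tau (q n) (p n)).
Proof.
move=> hq hp; apply/nondecreasing_seqP => n.
have [qp|] := pselect (ll tau (q n) (p n)); last first.
  by move=> /negP; rewrite -leNgt => /le_trans; apply.
have qp' := tau_le_extendr qp (hp n).
apply: le_trans qp' (tau_le_extendl (hq n) (lt_le_trans qp qp')).
Qed.

Lemma taubar_gt0_chains a b : 0 < taubar tau a b ->
  gen_by_past_chain tau a.2 /\ gen_by_future_chain tau b.1.
Proof.
rewrite /taubar; case: pselect => _; first by rewrite ltxx.
case: pselect => [h _|]; last by rewrite ltxx.
case: (cid h) => -[q p] [hq [qa [hp pb]]] /=.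
by split; [exists q | exists p].
Qed.

Lemma taubar_gt0P a b :
  gen_by_past_chain tau a.2 -> gen_by_future_chain tau b.1 ->
  0 < taubar tau a b <-> a.2 `&` b.1 !=set0.
Proof.
move=> [q0 [hq0 q0a]] [p0 [hp0 p0b]]; rewrite /taubar.
case: pselect => [[->|->]|_].
- by split=> [|[w [[] _]]]; rewrite ltxx.
- by split=> [|[w [_ []]]]; rewrite ltxx.
case: pselect => [h|]; last by case; exists (q0, p0).
case: (cid h) => -[q p] [/= hq [<- [hp <-]]] /=.
split=> [lim_gt0|[w [[_ [m _ <-] qw] [_ [k _ <-] wp]]]].
  have [n qp] : exists n, ll tau (q n) (p n).
    apply: contrapT => noll.
    suff u0 : (fun n => tau (q n) (p n)) = cst 0.
      by rewrite u0 lim_cst ?ltxx in lim_gt0.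
    apply/funext => n; apply/eqP; rewrite eq_le tau_ge0 andbT leNgt.
    by apply/negP => qp; apply: noll; exists n.
  exists (p n); split; first by exists (q n) => //; exists n.
  by exists (p n.+1); [exists n.+1 | exact: hp].
set u := fun n => tau (q n) (p n).
have u_nd := tau_chains_nondecreasing hq hp.
have -> : limn u = ereal_sup (range u).
  exact/cvg_lim/ereal_nondecreasing_cvgn.
set n := (m + k).+1.
have mn : (m < n)%N by rewrite ltnS leq_addr.
have kn : (k < n)%N by rewrite ltnS leq_addl.
have qp : ll tau (q n) (p n).
  apply: ll_trans (past_chain_lt ll_trans hq mn) _.
  exact: ll_trans qw (ll_trans wp (future_chain_lt ll_trans hp kn)).
by apply: lt_le_trans qp _; apply: ereal_sup_ubound; exists n.
Qed.

End Taubar.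

Section CausalClosure.
Context {R : realType} {X : topologicalType}.
Variable tau : X -> X -> \bar R.
Hypothesis tau_lsc : lower_semicontinuous (fun p : X * X => tau p.1 p.2).

Lemma Ip_nbhs w x : ll tau w x -> nbhs x (Ip tau w).
Proof.
move=> /(@tau_lsc (w, x) 0%R)[V [[A B] /= [Aw Bx] ABV] Vpos].
apply: filterS Bx => t Bt; apply: (Vpos (w, t)); apply: ABV.
by split=> //; apply: nbhs_singleton.
Qed.

Lemma Im_nbhs w x : ll tau x w -> nbhs x (Im tau w).
Proof.
move=> /(@tau_lsc (x, w) 0%R)[V [[A B] /= [Ax Bw] ABV] Vpos].
apply: filterS Ax => t At; apply: (Vpos (t, w)); apply: ABV.
by split=> //; apply: nbhs_singleton.
Qed.

Lemma closure_Jm_Im_sub x y : closure (Jm tau y) x -> Im tau x `<=` Im tau y.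
Proof. by move=> clx w /Ip_nbhs /clx[v [[vy _] wv]]; apply: vy. Qed.

Lemma closure_Jp_Ip_sub x y : closure (Jp tau x) y -> Ip tau y `<=` Ip tau x.
Proof. by move=> cly w /Im_nbhs /cly[v [[_ xv] vw]]; apply: xv. Qed.

Lemma leq_tau_closureE x y :
  leq_tau tau x y <-> closure (Jp tau x) y /\ closure (Jm tau y) x.
Proof.
split=> [xy|[cly clx]]; first by split; apply: subset_closure.
by split; [apply: closure_Jm_Im_sub | apply: closure_Jp_Ip_sub].
Qed.

End CausalClosure.

Section Completion.
Context {R : realType} {X : topologicalType}.
Variable tau : X -> X -> \bar R.
Hypotheses (lorentzian : is_lorentzian_metric tau) (fullX : full tau).
Hypotheses (sep : separable_lms tau) (Sprop : S_property tau).

Let ll_trans a b c : ll tau a b -> ll tau b c -> ll tau a c :=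
  @ll_trans_lorentzian _ _ tau lorentzian a b c.

Lemma IP_Im_IF_Ip z : IP tau (Im tau z) /\ IF tau (Ip tau z).
Proof.
have [[w zw] [v vz]] := fullX z.
case: (Sprop z).1 => [[_ [_ [IPz [IFz _]]]] //|[[_ [Ipz0 _]]|[Imz0 _]]].
- by rewrite Ipz0 in zw.
- by rewrite Imz0 in vz.
Qed.

Lemma Im_gen_by_future_chain z : gen_by_future_chain tau (Im tau z).
Proof.
have interp := separable_interpolate sep.
exact: IP_future_chain ll_trans interp _ sep (IP_Im_IF_Ip z).1.
Qed.

Lemma Ip_gen_by_past_chain z : gen_by_past_chain tau (Ip tau z).
Proof. exact: IF_past_chain ll_trans _ sep (IP_Im_IF_Ip z).2. Qed.

Lemma llbar_iembE z w : llbar tau (iemb tau z) (iemb tau w) <-> ll tau z w.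
Proof.
rewrite /llbar taubar_gt0P //=;
  [|exact: Ip_gen_by_past_chain | exact: Im_gen_by_future_chain].
split=> [[s [zs sw]]|/(separable_interpolate sep)[s zs sw]].
  exact: ll_trans zs sw.
by exists s.
Qed.

Lemma llbar_iemb_r c x y :
  Im tau x `<=` Im tau y ->
  llbar tau c (iemb tau x) -> llbar tau c (iemb tau y).
Proof.
move=> xy cx; have [cgen _] := taubar_gt0_chains cx.
move: cx; rewrite /llbar !taubar_gt0P //=; try exact: Im_gen_by_future_chain.
by move=> [w [cw wx]]; exists w; split=> //; apply: xy.
Qed.

Lemma llbar_iemb_l c x y :
  Ip tau y `<=` Ip tau x ->
  llbar tau (iemb tau y) c -> llbar tau (iemb tau x) c.
Proof.
move=> xy yc; have [_ cgen] := taubar_gt0_chains yc.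
move: yc; rewrite /llbar !taubar_gt0P //=; try exact: Ip_gen_by_past_chain.
by move=> [w [yw wc]]; exists w; split=> //; apply: xy.
Qed.

Lemma leq_taubar_iembE x y :
  leq_taubar tau (iemb tau x) (iemb tau y) <-> leq_tau tau x y.
Proof.
split=> [[cx yc]|[xy yx]].
  split=> z; rewrite /Im /Ip /= -!llbar_iembE.
    by apply: cx; case: (Sprop z).
  by apply: yc; case: (Sprop z).
by split=> c _; [apply: llbar_iemb_r | apply: llbar_iemb_l].
Qed.

End Completion.

Theorem mainTheorem19 (R : realType) (X : topologicalType) (tau : X -> X -> \bar R) :
  is_lorentzian_metric tau -> full tau -> separable_lms tau -> chron_dense tau ->
  S_property tau ->
  forall x y : X,
    leq_taubar tau (iemb tau x) (iemb tau y) <->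
    (closure (Jp tau x) y /\ closure (Jm tau y) x).
Proof.
move=> lorentzian fullX sep _ Sprop x y.
have [_ [tau_lsc _]] := lorentzian.
apply: iff_trans (leq_taubar_iembE lorentzian fullX sep Sprop x y) _.
exact: leq_tau_closureE tau_lsc x y.
Qed.
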